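(* Fix $\theta\in\mathbb R$ and let $\tau^\star(\theta)$ be the equalizing prejudice. Then for $\tau\in(-x_u,x_q)$, $s_1(\theta,\tau)>s_2(\theta,\tau)$ if and only if $\tau>\tau^\star(\theta)$ (equivalently, $s_1(\theta,\tau)<s_2(\theta,\tau)$ iff $\tau<\tau^\star(\theta)$).
   Context: Setup. Let $Q\in\{0,1\}$ be a random variable with $\mathbb P(Q=1)=\pi\in(0,1)$, and let $(\Theta,\Gamma)$ be a real-valued random vector whose conditional joint density given $Q=1$ is $h_q(\theta,\gamma)$ and given $Q=0$ is $h_u(\theta,\gamma)$, both strictly positive on $\mathbb R^2$. Monotone likelihood ratio assumption: $l(\theta,\gamma)=h_q(\theta,\gamma)/h_u(\theta,\gamma)$ is continuous and strictly increasing in each of $\theta$ and $\gamma$, and for each $\theta$ the map $\gamma\mapsto l(\theta,\gamma)$ has infimum $0$ and supremum $+\infty$. Fix payoffs $x_q>0$, $x_u>0$. For $\tau\in(-x_u,x_q)$ let $A(\tau)=\mathbb 1\{l(\Theta,\Gamma)>\frac{(1-\pi)(x_u+\tau)}{\pi(x_q-\tau)}\}$. Define $s_1(\theta,\tau)=\mathbb E[Q\mid\Theta=\theta,A(\tau)=1]$ and $s_2(\theta,\tau)=\mathbb E[A(\tau)\mid\Theta=\theta]$. The equalizing prejudice $\tau^\star(\theta)$ is the unique $\tau\in(-x_u,x_q)$ with $s_1(\theta,\tau)=s_2(\theta,\tau)$. *)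

From HB Require Import structures.
From mathcomp Require Import all_boot all_order all_algebra.
From mathcomp Require Import all_classical all_reals all_analysis.
Set Implicit Arguments. Unset Strict Implicit. Unset Printing Implicit Defensive.
Import Order.TTheory GRing.Theory Num.Theory.
Import numFieldNormedType.Exports.
Local Open Scope classical_set_scope.
Local Open Scope ring_scope.

Section Defs.
Variable R : realType.
Local Notation leb := (@lebesgue_measure R).

Definition lratio (hq hu : R -> R -> R) (t g : R) : R := hq t g / hu t g.

Definition thresh (pi xq xu tau : R) : R :=
  (1 - pi) * (xu + tau) / (pi * (xq - tau)).

(* {gamma | A(tau) = 1 at Theta = theta} *)
Definition accept_set (pi xq xu : R) (hq hu : R -> R -> R) (t tau : R) : set R :=
  [set g | thresh pi xq xu tau < lratio hq hu t g].

Definition sect_int (h : R -> R -> R) (t : R) (S : set R) : R :=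
  Rintegral leb S (h t).

(* P(A(tau)=1, Q = . , Theta in d theta)/d theta, summed over Q *)
Definition acc_mass pi xq xu hq hu t tau : R :=
  pi * sect_int hq t (accept_set pi xq xu hq hu t tau)
  + (1 - pi) * sect_int hu t (accept_set pi xq xu hq hu t tau).

(* s_1(theta,tau) = E[Q | Theta = theta, A(tau) = 1]  (Bayes with densities) *)
Definition s1 pi xq xu hq hu t tau : R :=
  pi * sect_int hq t (accept_set pi xq xu hq hu t tau)
  / acc_mass pi xq xu hq hu t tau.

(* s_2(theta,tau) = E[A(tau) | Theta = theta] *)
Definition s2 pi xq xu hq hu t tau : R :=
  acc_mass pi xq xu hq hu t tau
  / (pi * sect_int hq t setT + (1 - pi) * sect_int hu t setT).

(* h is a strictly positive joint probability density on R^2 whose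
   theta-sections are integrable (so conditioning on Theta = theta is defined
   pointwise through densities) *)
Definition pos_density (h : R -> R -> R) : Prop :=
  (forall t g, 0 < h t g) /\
  measurable_fun [set: R * R] (fun p : R * R => h p.1 p.2) /\
  (\int[(leb \x leb)%E]_p (h p.1 p.2)%:E = 1)%E /\
  (forall t, leb.-integrable [set: R] (fun g => (h t g)%:E)).

Definition MLR (hq hu : R -> R -> R) : Prop :=
  continuous (fun p : R * R => lratio hq hu p.1 p.2) /\
  (forall g x y, x < y -> lratio hq hu x g < lratio hq hu y g) /\
  (forall t x y, x < y -> lratio hq hu t x < lratio hq hu t y) /\
  (forall t e, 0 < e -> exists g, lratio hq hu t g < e) /\
  (forall t M, exists g, M < lratio hq hu t g).

End Defs.

(* Raising the prejudice tau raises the likelihood-ratio threshold, so the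
   acceptance set A(tau) of the Theta-section shrinks.  Hence s2(theta, tau), the
   mass of A(tau), decreases, while s1(theta, tau), the posterior of Q = 1 on
   A(tau), increases: the part removed from A(tau) has likelihood ratio below
   every point kept.  So s1 - s2 is nondecreasing on (-x_u, x_q), and a
   nondecreasing function whose only zero is tau* is negative before tau* and
   positive after it.  Positivity of the integrals over A(tau) (needed to divide)
   comes from A(tau) containing a whole interval, by the unboundedness of the
   likelihood ratio. *)

From HB Require Import structures.
From mathcomp Require Import all_boot all_order all_algebra.
From mathcomp Require Import all_classical all_reals all_analysis.
From mathcomp Require Import lra.
Set Implicit Arguments. Unset Strict Implicit. Unset Printing Implicit Defensive.
Import Order.TTheory GRing.Theory Num.Theory.
Import measurable_realfun.
Local Open Scope classical_set_scope.
Local Open Scope ring_scope.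

Section positive_integral.
Context d (T : measurableType d) (R : realType) (mu : {measure set T -> \bar R}).

Lemma integral_gt0 (D : set T) (f : T -> R) :
  measurable D -> measurable_fun D f -> (forall x, D x -> 0 < f x) ->
  (0 < mu D)%E -> (0 < \int[mu]_(x in D) (f x)%:E)%E.
Proof.
move=> mD mf f_gt0 muD_gt0.
rewrite lt0e integral_ge0 ?andbT; last by move=> x Dx; rewrite lee_fin ltW ?f_gt0.
apply: contraTN muD_gt0 => /eqP int0; rewrite -leNgt.
have mEf : measurable_fun D (fun x => (f x)%:E) by exact/measurable_EFinP.
have /(ae_eq_integral_abs mu mD mEf) [N [mN muN0 DN]] :
    (\int[mu]_(x in D) `|(f x)%:E| = 0)%E.
  rewrite -int0; apply: eq_integral => x /[!inE] Dx.
  by rewrite gee0_abs // lee_fin ltW ?f_gt0.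
rewrite -muN0 le_measure ?inE //.
move=> x Dx; apply: DN => /(_ Dx) /= /eqP; rewrite eqe.
by rewrite gt_eqF ?f_gt0.
Qed.

Lemma Rintegral_gt0 (D : set T) (f : T -> R) :
  measurable D -> mu.-integrable D (EFin \o f) -> (forall x, D x -> 0 < f x) ->
  (0 < mu D)%E -> 0 < \int[mu]_(x in D) f x.
Proof.
move=> mD intf f_gt0 muD_gt0; apply: fine_gt0.
rewrite integral_gt0 //=; last by apply/measurable_EFinP; case/integrableP: intf.
by rewrite ltey_eq integrable_fin_num.
Qed.

End positive_integral.

Lemma sign_of_nondecreasing_unique_root (R : realDomainType) (F : R -> R)
    (a b x0 : R) :
  {in `]a, b[ &, {homo F : x y / x <= y}} ->
  x0 \in `]a, b[ -> F x0 = 0 -> {in `]a, b[, forall x, F x = 0 -> x = x0} ->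
  {in `]a, b[, forall x, (0 < F x <-> x0 < x) /\ (F x < 0 <-> x < x0)}.
Proof.
move=> F_mono x0_in F_x0 F_root x x_in.
have F_neq0 : x != x0 -> F x != 0 by apply: contraNN => /eqP/(F_root _ x_in)->.
have [x0_lt_x|x_lt_x0|x0_eq_x] := ltgtP x0 x.
- have : 0 <= F x by rewrite -F_x0 F_mono // ltW.
  rewrite le_eqVlt eq_sym (negPf (F_neq0 _)) ?gt_eqF //= => Fx_gt0.
  by split; split => ?; lra.
- have : F x <= 0 by rewrite -F_x0 F_mono // ltW.
  rewrite le_eqVlt (negPf (F_neq0 _)) ?lt_eqF //= => Fx_lt0.
  by split; split => ?; lra.
- by rewrite -x0_eq_x F_x0 ltxx.
Qed.

(* [p a / (p a + (1 - p) b)] is the posterior of [Q = 1] on a set carrying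
   masses [a] under [Q = 1] and [b] under [Q = 0]; adding a piece of lower
   likelihood ratio ([a' / b' <= a / b]) lowers it. *)
Lemma posterior_le (R : realFieldType) (p a b a' b' : R) :
  0 < p < 1 -> 0 < a -> 0 <= b -> 0 <= a' -> 0 <= b' -> a' * b <= a * b' ->
  p * (a + a') / (p * (a + a') + (1 - p) * (b + b'))
    <= p * a / (p * a + (1 - p) * b).
Proof.
move=> /andP[p_gt0 p_lt1] a_gt0 b_ge0 a'_ge0 b'_ge0 cross.
have q_ge0 : 0 <= 1 - p by lra.
have m_gt0 : 0 < p * a + (1 - p) * b.
  by have := mulr_gt0 p_gt0 a_gt0; have := mulr_ge0 q_ge0 b_ge0; lra.
have m'_gt0 : 0 < p * (a + a') + (1 - p) * (b + b').
  have : 0 < a + a' by lra.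
  by move/(mulr_gt0 p_gt0); have := mulr_ge0 q_ge0 (addr_ge0 b_ge0 b'_ge0); lra.
rewrite ler_pdivrMr // mulrAC ler_pdivlMr //.
by have := ler_wpM2l (mulr_ge0 (ltW p_gt0) q_ge0) cross; lra.
Qed.

Lemma thresh_le (R : realType) (pi xq xu tau1 tau2 : R) :
  0 < pi <= 1 -> - xu < tau1 -> tau1 <= tau2 -> tau2 < xq ->
  thresh pi xq xu tau1 <= thresh pi xq xu tau2.
Proof.
move=> /andP[pi_gt0 pi_le1] tau1_gt tau12 tau2_lt.
rewrite /thresh ler_pM //.
- by rewrite mulr_ge0 //; lra.
- by rewrite invr_ge0 mulr_ge0 //; lra.
- by rewrite ler_wpM2l ?lerD2l //; lra.
- by rewrite lef_pV2 ?posrE ?mulr_gt0 ?ler_wpM2l ?lerD2l ?lerN2 //; lra.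
Qed.

Section section_integrals.
Variable R : realType.
Implicit Types (h : R -> R -> R) (t : R) (S : set R).
Local Notation leb := (@lebesgue_measure R).

Lemma pos_density_integrable h t S :
  pos_density h -> measurable S -> leb.-integrable S (EFin \o h t).
Proof. by move=> [_ [_ [_ h_int]]] mS; exact: integrableS (h_int t). Qed.

Lemma pos_density_measurable h t : pos_density h -> measurable_fun setT (h t).
Proof.
move=> dh; apply/measurable_EFinP.
by case/integrableP: (pos_density_integrable t dh (@measurableT _ R)).
Qed.

Lemma pos_density_integrableZ h t S c :
  pos_density h -> measurable S ->
  leb.-integrable S (EFin \o (fun g => c * h t g)).
Proof.
move=> dh mS.
apply: (@eq_integrable _ _ _ leb S mS (fun g => (c%:E * (h t g)%:E)%E)) => //.
exact/integrableZl/pos_density_integrable.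
Qed.

Lemma sect_intZ_le h1 h2 t S c :
  pos_density h1 -> pos_density h2 -> measurable S ->
  (forall g, S g -> c * h1 t g <= h2 t g) ->
  c * sect_int h1 t S <= sect_int h2 t S.
Proof.
move=> dh1 dh2 mS h12; rewrite /sect_int -RintegralZl ?pos_density_integrable //.
by apply: le_Rintegral; rewrite ?pos_density_integrableZ ?pos_density_integrable.
Qed.

Lemma sect_int_leZ h1 h2 t S c :
  pos_density h1 -> pos_density h2 -> measurable S ->
  (forall g, S g -> h2 t g <= c * h1 t g) ->
  sect_int h2 t S <= c * sect_int h1 t S.
Proof.
move=> dh1 dh2 mS h21; rewrite /sect_int -RintegralZl ?pos_density_integrable //.
by apply: le_Rintegral; rewrite ?pos_density_integrableZ ?pos_density_integrable.
Qed.

Lemma sect_int_ge0 h t S : pos_density h -> 0 <= sect_int h t S.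
Proof. by move=> [h_gt0 _]; apply: Rintegral_ge0 => x _; exact: ltW. Qed.

Lemma sect_int_setD h t S1 S2 :
  pos_density h -> measurable S1 -> measurable S2 -> S2 `<=` S1 ->
  sect_int h t S1 = sect_int h t S2 + sect_int h t (S1 `\` S2).
Proof.
move=> dh mS1 mS2 S21; rewrite /sect_int -Rintegral_setU ?setDUK //.
- exact: measurableD.
- exact: pos_density_integrable.
- by rewrite /disj_set setDIK.
Qed.

Lemma sect_int_le h t S1 S2 :
  pos_density h -> measurable S1 -> measurable S2 -> S2 `<=` S1 ->
  sect_int h t S2 <= sect_int h t S1.
Proof.
move=> dh mS1 mS2 S21.
by rewrite (sect_int_setD t dh mS1 mS2 S21) lerDl sect_int_ge0.
Qed.

End section_integrals.

Section acceptance.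
Variables (R : realType) (pi xq xu : R) (hq hu : R -> R -> R) (t : R).
Hypotheses (pi01 : 0 < pi < 1) (dq : pos_density hq) (du : pos_density hu)
  (mlr : MLR hq hu).
Local Notation A := (accept_set pi xq xu hq hu t).

Lemma accept_setE tau :
  A tau = [set g | thresh pi xq xu tau * hu t g < hq t g].
Proof.
by apply/seteqP; split => g; rewrite /accept_set /lratio /= ltr_pdivlMr ?du.1.
Qed.

Lemma measurable_accept_set tau : measurable (A tau).
Proof.
have mhu := pos_density_measurable t du.
have := measurable_fun_ltr
  (measurable_funM (measurable_cst (thresh pi xq xu tau)) mhu)
  (pos_density_measurable t dq) measurableT (I : measurable [set true]).
by rewrite setTI accept_setE.
Qed.

Lemma accept_set_le tau1 tau2 :
  - xu < tau1 -> tau1 <= tau2 -> tau2 < xq -> A tau2 `<=` A tau1.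
Proof.
move=> tau1_gt tau12 tau2_lt g; apply: le_lt_trans.
by apply: thresh_le => //; case/andP: pi01 => -> /ltW ->.
Qed.

Lemma sect_int_accept_set_gt0 h tau : pos_density h -> 0 < sect_int h t (A tau).
Proof.
case: mlr => [_ [_ [lr_mono [_ lr_unbounded]]]] dh.
have [g0 lr_g0] := lr_unbounded t (thresh pi xq xu tau).
have I_sub : `[g0, g0 + 1] `<=` A tau.
  move=> g; rewrite /= in_itv /= => /andP[g0_le_g _]; apply: (lt_le_trans lr_g0).
  by move: g0_le_g; rewrite le_eqVlt => /predU1P[->//|/lr_mono/ltW].
have I_gt0 : (0 < (@lebesgue_measure R) `[g0, (g0 + 1)%R]%classic)%E.
  rewrite lebesgue_measure_itv /= lte_fin ltrDl ltr01.
  by rewrite -EFinD addrAC subrr add0r.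
apply: (lt_le_trans _ (sect_int_le t dh (measurable_accept_set tau)
  (measurable_itv _) I_sub)).
apply: Rintegral_gt0 => //; first exact: pos_density_integrable.
by move=> g _; exact: dh.1.
Qed.

Section monotone.
Variables tau1 tau2 : R.
Hypotheses (tau1_gt : - xu < tau1) (tau12 : tau1 <= tau2) (tau2_lt : tau2 < xq).

Lemma acc_mass_le :
  acc_mass pi xq xu hq hu t tau2 <= acc_mass pi xq xu hq hu t tau1.
Proof.
have A21 := accept_set_le tau1_gt tau12 tau2_lt.
have [mA1 mA2] := (measurable_accept_set tau1, measurable_accept_set tau2).
case/andP: pi01 => pi_gt0 pi_lt1.
by rewrite lerD // ler_wpM2l ?sect_int_le //; lra.
Qed.

Lemma s2_le : s2 pi xq xu hq hu t tau2 <= s2 pi xq xu hq hu t tau1.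
Proof.
case/andP: pi01 => pi_gt0 pi_lt1.
rewrite ler_wpM2r ?acc_mass_le // invr_ge0.
by rewrite addr_ge0 // mulr_ge0 ?sect_int_ge0 //; lra.
Qed.

(* On [A tau2] the likelihood ratio exceeds [thresh tau2] and on
   [A tau1 `\` A tau2] it does not; this gives the cross inequality of
   [posterior_le]. *)
Lemma s1_le : s1 pi xq xu hq hu t tau1 <= s1 pi xq xu hq hu t tau2.
Proof.
have A21 := accept_set_le tau1_gt tau12 tau2_lt.
have [mA1 mA2] := (measurable_accept_set tau1, measurable_accept_set tau2).
have mD := measurableD mA1 mA2.
have hq_ge :
    thresh pi xq xu tau2 * sect_int hu t (A tau2) <= sect_int hq t (A tau2).
  by apply: sect_intZ_le => // g; rewrite accept_setE => /ltW.
have hq_le : sect_int hq t (A tau1 `\` A tau2)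
             <= thresh pi xq xu tau2 * sect_int hu t (A tau1 `\` A tau2).
  by apply: sect_int_leZ => // g [_]; rewrite accept_setE /= leNgt => /negP.
rewrite /s1 /acc_mass (sect_int_setD t dq mA1 mA2 A21).
rewrite (sect_int_setD t du mA1 mA2 A21).
apply: posterior_le; rewrite ?sect_int_ge0 ?sect_int_accept_set_gt0 //.
apply: (le_trans (ler_wpM2r (sect_int_ge0 _ _ du) hq_le)).
by rewrite mulrAC ler_wpM2r ?sect_int_ge0.
Qed.

End monotone.

Lemma s1_sub_s2_nondecreasing :
  {in `]- xu, xq[ &,
    {homo (fun tau => s1 pi xq xu hq hu t tau - s2 pi xq xu hq hu t tau) :
      x y / x <= y}}.
Proof.
move=> x y /[!in_itv] /andP[x_gt _] /andP[_ y_lt] xy.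
by rewrite lerB ?s1_le ?s2_le.
Qed.

End acceptance.

Theorem mainTheorem5 (R : realType) (pi xq xu : R) (hq hu : R -> R -> R)
  (theta tstar : R) :
  0 < pi < 1 -> 0 < xq -> 0 < xu ->
  pos_density hq -> pos_density hu -> MLR hq hu ->
  - xu < tstar < xq ->
  s1 pi xq xu hq hu theta tstar = s2 pi xq xu hq hu theta tstar ->
  (forall tau, - xu < tau < xq ->
     s1 pi xq xu hq hu theta tau = s2 pi xq xu hq hu theta tau -> tau = tstar) ->
  forall tau, - xu < tau < xq ->
    (s2 pi xq xu hq hu theta tau < s1 pi xq xu hq hu theta tau <-> tstar < tau) /\
    (s1 pi xq xu hq hu theta tau < s2 pi xq xu hq hu theta tau <-> tau < tstar).
Proof.
move=> pi01 _ _ dq du mlr tstar_in s_tstar tstar_unique tau tau_in.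
set F := fun x => s1 pi xq xu hq hu theta x - s2 pi xq xu hq hu theta x.
have F_root : {in `]- xu, xq[, forall x, F x = 0 -> x = tstar}.
  by move=> x /[!in_itv] x_in /eqP; rewrite subr_eq0 => /eqP; exact: tstar_unique.
have tau_itv : tau \in `]- xu, xq[ by rewrite in_itv.
have [] := sign_of_nondecreasing_unique_root
  (s1_sub_s2_nondecreasing theta pi01 dq du mlr) _ _ F_root tau_itv.
- by rewrite in_itv.
- by rewrite /F s_tstar subrr.
by rewrite /F subr_gt0 subr_lt0; split.
Qed.
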